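(* Let $J,\mu,\Delta\in\mathbb{R}$, $T>0$, let $(\kappa_l)_{l\ge1}$ be any real sequence, and let $N\ge4$ be even. Then for every $k\in\{(2n+1)\pi/N: n=0,\dots,N-1\}$ with $\epsilon(k)>0$, $$\mathscr{E}_J(k)\le\sqrt{2}\,T .$$ In particular $\mathscr{E}_J$ is bounded uniformly in $k$ and $N$, and the uncontrolled quantum Fisher information $I(J)=\big(\sum_k\mathscr{E}_J(k)\big)^2$ satisfies $I(J)\le 2T^2N^2$, so it is at most of Heisenberg scaling.
   Context: Let $f_N(k)=2\sum_{l=1}^{N/2-1}\kappa_l\sin(kl)+\kappa_{N/2}$ and $\epsilon(k)=\sqrt{[\Delta f_N(k)/2]^2+(J\cos k+\mu)^2}$ (the Bogoliubov quasiparticle energy of the long-range Kitaev chain). For a parameter $\theta$, given real functions $a_\theta(k)$ and $\xi_\theta(k)$, set $$\mathscr{E}_\theta(k)=\Big\{T^2a_\theta(k)^2+\tfrac14\xi_\theta(k)^2\sin^2[2\epsilon(k)T]+\tfrac14\xi_\theta(k)^2\big(1-\cos[2\epsilon(k)T]\big)^2\Big\}^{1/2},$$ the single-mode eigenvalues of the estimation generator. For $\theta=J$: $a_J(k)=\partial_J\epsilon(k)=\cos k\,(J\cos k+\mu)/\epsilon(k)$ and $\xi_J(k)=\Delta f_N(k)\cos k/[2\epsilon(k)^2]$. *)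

From Stdlib Require Import Reals Lra Lia.
Open Scope R_scope.

Fixpoint sumR (m : nat) (g : nat -> R) : R :=
  match m with
  | O => 0
  | S m' => sumR m' g + g (S m')
  end.

Definition fN (kappa : nat -> R) (N : nat) (k : R) : R :=
  2 * sumR (N / 2 - 1)%nat (fun l => kappa l * sin (k * INR l)) + kappa (N / 2)%nat.

Definition eps (kappa : nat -> R) (N : nat) (J mu Delta k : R) : R :=
  sqrt ((Delta * fN kappa N k / 2) ^ 2 + (J * cos k + mu) ^ 2).

Definition Ecal (T a xi e : R) : R :=
  sqrt (T ^ 2 * a ^ 2 + / 4 * xi ^ 2 * (sin (2 * e * T)) ^ 2
        + / 4 * xi ^ 2 * (1 - cos (2 * e * T)) ^ 2).

Definition a_J (kappa : nat -> R) (N : nat) (J mu Delta k : R) : R :=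
  cos k * (J * cos k + mu) / eps kappa N J mu Delta k.

Definition xi_J (kappa : nat -> R) (N : nat) (J mu Delta k : R) : R :=
  Delta * fN kappa N k * cos k / (2 * (eps kappa N J mu Delta k) ^ 2).

Definition E_J (kappa : nat -> R) (N : nat) (J mu Delta T k : R) : R :=
  Ecal T (a_J kappa N J mu Delta k) (xi_J kappa N J mu Delta k) (eps kappa N J mu Delta k).

Definition kmom (N n : nat) : R := INR (2 * n + 1) * PI / INR N.

Fixpoint sum_modes (m : nat) (g : nat -> R) (P : nat -> Prop)
  (dec : forall n, {P n} + {~ P n}) : R :=
  match m with
  | O => 0
  | S m' => sum_modes m' g P dec + (if dec m' then g m' else 0)
  end.

From Stdlib Require Import Reals Lra Psatz.
Open Scope R_scope.

(* Write e = eps(k) > 0.  The two kick terms of the generic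
   eigenvalue combine, by the double-angle formulas, into xi^2 sin(eT)^2, and
   |sin x| <= |x| gives xi^2 sin(eT)^2 <= (xi e)^2 T^2.  Hence
   Ecal T a xi e <= T sqrt(a^2 + (xi e)^2), which is at most sqrt 2 T as soon
   as a^2 <= 1 and (xi e)^2 <= 1 (lemma Ecal_le).  For theta = J, with
   A = Delta f_N(k)/2 and B = J cos k + mu we have e^2 = A^2 + B^2,
   a_J = cos k B / e and xi_J e = cos k A / e, and both are bounded by 1 in
   absolute value because |cos k| <= 1 (lemma E_J_le).  The bound on the Fisher
   information then follows by summing the single-mode bound over at most N
   modes (lemma sum_modes_le) and squaring. *)

Lemma sin_sq_le (x : R) : 0 < x -> sin x ^ 2 <= x ^ 2.
Proof.
  intros Hx. destruct (Rle_lt_dec x 1) as [Hx1 | Hx1].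
  - assert (0 < sin x) by (apply sin_gt_0; [lra | pose proof PI2_1; lra]).
    pose proof (sin_lt_x x Hx). nra.
  - pose proof (SIN_bound x). nra.
Qed.

Lemma kick_identity (x : R) :
  sin (2 * x) ^ 2 + (1 - cos (2 * x)) ^ 2 = 4 * sin x ^ 2.
Proof.
  rewrite sin_2a, cos_2a_sin. pose proof (sin2_cos2 x). unfold Rsqr in *. nra.
Qed.

Lemma sq_div_le_one (x y : R) : y <> 0 -> x ^ 2 <= y ^ 2 -> (x / y) ^ 2 <= 1.
Proof.
  intros Hy Hxy. assert (0 < y ^ 2) by (assert (y < 0 \/ 0 < y) as [|] by lra; nra).
  replace ((x / y) ^ 2) with (x ^ 2 * / y ^ 2) by (field; exact Hy).
  rewrite <- (Rinv_r (y ^ 2)) by lra.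
  apply Rmult_le_compat_r; [apply Rlt_le, Rinv_0_lt_compat |]; lra.
Qed.

Lemma Ecal_le (T a xi e : R) :
  0 < T -> 0 < e -> a ^ 2 <= 1 -> (xi * e) ^ 2 <= 1 ->
  Ecal T a xi e <= sqrt 2 * T.
Proof.
  intros HT He Ha Hxi. unfold Ecal.
  replace (2 * e * T) with (2 * (e * T)) by ring.
  assert (Hsum : T ^ 2 * a ^ 2 + / 4 * xi ^ 2 * sin (2 * (e * T)) ^ 2
                 + / 4 * xi ^ 2 * (1 - cos (2 * (e * T))) ^ 2
               = T ^ 2 * a ^ 2 + xi ^ 2 * sin (e * T) ^ 2).
  { transitivity (T ^ 2 * a ^ 2 + / 4 * xi ^ 2
                  * (sin (2 * (e * T)) ^ 2 + (1 - cos (2 * (e * T))) ^ 2)); [ring |].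
    rewrite kick_identity. field. }
  assert (Hsin : xi ^ 2 * sin (e * T) ^ 2 <= (xi * e) ^ 2 * T ^ 2).
  { pose proof (sin_sq_le (e * T) ltac:(nra)).
    replace ((xi * e) ^ 2 * T ^ 2) with (xi ^ 2 * (e * T) ^ 2) by ring.
    apply Rmult_le_compat_l; nra. }
  assert (Hsqrt : sqrt 2 * T = sqrt (2 * T ^ 2)).
  { rewrite sqrt_mult, sqrt_pow2; nra. }
  rewrite Hsum, Hsqrt. apply sqrt_le_1_alt. nra.
Qed.

Lemma eps_sq (kappa : nat -> R) (N : nat) (J mu Delta k : R) :
  eps kappa N J mu Delta k ^ 2
  = (Delta * fN kappa N k / 2) ^ 2 + (J * cos k + mu) ^ 2.
Proof. unfold eps. rewrite <- Rsqr_pow2, Rsqr_sqrt; [reflexivity | apply Rplus_le_le_0_compat; apply pow2_ge_0]. Qed.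

Lemma E_J_le (kappa : nat -> R) (N : nat) (J mu Delta T k : R) :
  0 < T -> 0 < eps kappa N J mu Delta k ->
  E_J kappa N J mu Delta T k <= sqrt 2 * T.
Proof.
  intros HT He. unfold E_J. apply Ecal_le; [exact HT | exact He | |].
  all: set (e := eps kappa N J mu Delta k) in *;
       set (A := Delta * fN kappa N k / 2);
       set (B := J * cos k + mu).
  all: assert (He2 : e ^ 2 = A ^ 2 + B ^ 2) by apply eps_sq;
       assert (Hc : cos k ^ 2 <= 1) by (pose proof (COS_bound k); nra).
  - replace (a_J kappa N J mu Delta k) with (cos k * B / e) by reflexivity.
    apply sq_div_le_one; [lra | nra].
  - replace (xi_J kappa N J mu Delta k * e) with (cos k * A / e)
      by (unfold xi_J, A; fold e; field; lra).
    apply sq_div_le_one; [lra | nra].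
Qed.

Lemma sum_modes_le (g : nat -> R) (P : nat -> Prop)
  (dec : forall n, {P n} + {~ P n}) (M : R) (m : nat) :
  0 <= M -> (forall n, 0 <= g n) -> (forall n, (n < m)%nat -> P n -> g n <= M) ->
  0 <= sum_modes m g P dec <= INR m * M.
Proof.
  intros HM Hg. induction m as [|m IH]; intros Hle; cbn [sum_modes].
  - simpl. lra.
  - rewrite S_INR.
    assert (IHm : 0 <= sum_modes m g P dec <= INR m * M) by (apply IH; auto).
    destruct (dec m) as [Hp | _].
    + pose proof (Hg m). pose proof (Hle m (Nat.lt_succ_diag_r m) Hp). lra.
    + lra.
Qed.

Theorem mainTheorem8 (J mu Delta T : R) (kappa : nat -> R) (N : nat) :
  0 < T -> Nat.Even N -> (4 <= N)%nat ->
  (forall n : nat, (n < N)%nat ->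
     0 < eps kappa N J mu Delta (kmom N n) ->
     E_J kappa N J mu Delta T (kmom N n) <= sqrt 2 * T)
  /\
  (sum_modes N (fun n => E_J kappa N J mu Delta T (kmom N n))
     (fun n => 0 < eps kappa N J mu Delta (kmom N n))
     (fun n => Rlt_dec 0 (eps kappa N J mu Delta (kmom N n)))) ^ 2
   <= 2 * T ^ 2 * (INR N) ^ 2.
Proof.
  intros HT _ _.
  assert (Hmode : forall n, (n < N)%nat -> 0 < eps kappa N J mu Delta (kmom N n) ->
            E_J kappa N J mu Delta T (kmom N n) <= sqrt 2 * T)
    by (intros n _ He; exact (E_J_le _ _ _ _ _ _ _ HT He)).
  split; [exact Hmode |].
  assert (Hs2 : sqrt 2 * sqrt 2 = 2) by (apply sqrt_sqrt; lra).
  assert (Hsum := sum_modes_le _ _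
                    (fun n => Rlt_dec 0 (eps kappa N J mu Delta (kmom N n)))
                    (sqrt 2 * T) N
                    ltac:(pose proof (sqrt_pos 2); nra)
                    (fun n => sqrt_pos _) Hmode).
  assert (Hsq : (INR N * (sqrt 2 * T)) ^ 2 = 2 * T ^ 2 * INR N ^ 2).
  { rewrite <- Hs2 at 2. ring. }
  rewrite <- Hsq. apply pow_incr. exact Hsum.
Qed.
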